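(* Let $\eta>0$, $\Psi(\boldsymbol x):=\log\sum_{i=1}^N\exp(\sqrt2\eta x_i)$ for $\boldsymbol x\in\mathbb{R}^N$, and $\log\Phi(\boldsymbol x,t)=-\eta^2t+\Psi(\boldsymbol x)$ for $(\boldsymbol x,t)\in\mathbb{R}^{N+1}$ (the logarithm of the total potential $\Phi(\boldsymbol x,t)=\sum_i\exp(\sqrt2\eta x_i-\eta^2t)$). Then $\Psi$ satisfies $(2\sqrt2\eta,2)$-generalized self-concordance on all of $\mathbb{R}^N$ with respect to $\|\cdot\|_\infty$, and $\log\Phi$ satisfies $(2\sqrt2\eta,2)$-generalized self-concordance on all of $\mathbb{R}^{N+1}$ with respect to $\|\cdot\|_*$, where $\|(\boldsymbol x,t)\|_*=\|\boldsymbol x\|_\infty$.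
   Context: A $C^3$ function $f$ on an open set $\mathrm{dom}(f)\subseteq\mathbb{R}^p$ satisfies $(M,2)$-generalized self-concordance in a (semi)norm $\|\cdot\|_*$ on $\mathcal C\subseteq\mathrm{dom}(f)$ if for all $\boldsymbol x\in\mathcal C$ and $\boldsymbol u,\boldsymbol v\in\mathbb{R}^p$: $|\nabla^3f(\boldsymbol x)[\boldsymbol u,\boldsymbol u,\boldsymbol v]|\le M\|\boldsymbol v\|_*\,\boldsymbol u^{\mathsf T}\nabla^2f(\boldsymbol x)\boldsymbol u$. It is global when $\mathcal C=\mathrm{dom}(f)$. *)

From HB Require Import structures.
From mathcomp Require Import all_boot all_order all_algebra.
From mathcomp Require Import all_classical all_reals all_analysis.
Set Implicit Arguments. Unset Strict Implicit. Unset Printing Implicit Defensive.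
Import Order.TTheory GRing.Theory Num.Theory.
Import numFieldNormedType.Exports.
Local Open Scope classical_set_scope.
Local Open Scope ring_scope.

Section Defs.
Variable R : realType.

Definition linf_norm (N : nat) (x : 'rV[R]_N) : R :=
  \big[Num.max/0]_(i < N) `|x ord0 i|.

Definition Psi (eta : R) (N : nat) (x : 'rV[R]_N) : R :=
  ln (\sum_(i < N) expR (Num.sqrt 2 * eta * x ord0 i)).

Definition logPhi (eta : R) (N : nat) (z : 'rV[R]_N * R) : R :=
  - (eta ^+ 2) * z.2 + Psi eta z.1.

(* (M,2)-generalized self-concordance of f in the (semi)norm nrm on C.
   u^T Hess f(x) u is the second directional derivative 'D_u ('D_u f) x,
   and Hess^3 f(x)[u,u,v] is 'D_v ('D_u ('D_u f)) x; the derivability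
   clauses record (the directional part of) the C^3 requirement. *)
Definition gen_self_concordant2 (V : normedModType R) (f : V -> R)
    (nrm : V -> R) (M : R) (C : set V) : Prop :=
  forall x, C x -> forall u v : V,
    [/\ derivable f x u, derivable ('D_u f) x u,
        derivable ('D_u ('D_u f)) x v &
        `| 'D_v ('D_u ('D_u f)) x | <= M * nrm v * 'D_u ('D_u f) x].

End Defs.

From HB Require Import structures.
From mathcomp Require Import all_boot all_order all_algebra.
From mathcomp Require Import all_classical all_reals all_analysis.
From mathcomp Require Import ring lra.
Set Implicit Arguments. Unset Strict Implicit. Unset Printing Implicit Defensive.
Import Order.TTheory GRing.Theory Num.Theory.
Import numFieldNormedType.Exports.
Local Open Scope classical_set_scope.
Local Open Scope ring_scope.

(* Write a = sqrt 2 * eta and let p(y) be the Gibbs distribution with p_i(y)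
   proportional to exp(a y_i).  The successive derivatives of
   y |-> log sum_i exp(a y_i) along u, u, v are a E_p[u], a^2 Var_p(u) and
   a^3 E_p[(u - E_p u)^2 (v - E_p v)].  Since |v_i - E_p v| <= 2 ||v||_oo, the
   third is at most 2|a| ||v||_oo times the second.  log Phi only adds a linear
   function of the extra coordinate t, which leaves the second and third
   derivatives unchanged. *)

Section DirectionalDerivative.
Variables (R : realType) (V : normedModType R).
Implicit Types (f : V -> R) (x v : V).

Lemma derive_lineE (W : normedModType R) (f : V -> W) x v :
  'D_v f x = 'D_(1 : R) (fun h : R => f (h *: v + x)) 0.
Proof.
rewrite /derive; set g1 := fun h => h^-1 *: _; set g2 := fun h => h^-1 *: _.
suff -> : g1 = g2 by [].
by rewrite funeqE /g1 /g2 => h /=; rewrite addr0 scale0r add0r [_%:A]mulr1.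
Qed.

Lemma is_derive_lineP (W : normedModType R) (f : V -> W) x v d :
  is_derive x v f d <-> is_derive (0 : R) (1 : R) (fun h : R => f (h *: v + x)) d.
Proof.
split=> -[dfx <-]; constructor; rewrite ?derive_lineE //.
- exact: (iffLR (derivable1P f x v)).
- exact: (iffRL (derivable1P f x v)).
Qed.

Lemma is_derive_comp_real f (g : R -> R) x v df dg :
  is_derive x v f df -> is_derive (f x) 1 g dg -> is_derive x v (g \o f) (dg * df).
Proof.
move=> /is_derive_lineP fx gfx; apply/is_derive_lineP.
by apply: is_derive1_comp; rewrite scale0r add0r.
Qed.

Lemma is_derive_comp_inv f x v df : f x != 0 -> is_derive x v f df ->
  is_derive x v (fun y => (f y)^-1) (- (f x) ^- 2 * df).
Proof.
move=> fx0 [dfx <-]; constructor; first exact: derivableV.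
exact: deriveV.
Qed.

Lemma is_derive_comp_ln f x v df : 0 < f x -> is_derive x v f df ->
  is_derive x v (fun y => ln (f y)) ((f x)^-1 * df).
Proof. by move=> fx0 dfx; apply: is_derive_comp_real dfx _; exact: is_derive1_ln. Qed.

Lemma is_derive_comp_expR f x v df : is_derive x v f df ->
  is_derive x v (fun y => expR (f y)) (expR (f x) * df).
Proof. by move=> dfx; apply: is_derive_comp_real dfx _; exact: is_derive_expR. Qed.

End DirectionalDerivative.

Lemma is_derive_coord (R : realType) m n (i : 'I_m) (j : 'I_n) (x v : 'M[R]_(m, n)) :
  is_derive x v (fun y : 'M[R]_(m, n) => y i j) (v i j).
Proof.
apply/is_derive_lineP.
have -> : (fun h : R => (h *: v + x) i j) = (fun h => h * v i j + x i j).
  by apply/funext => h; rewrite !mxE.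
by apply: is_derive_eq; rewrite scale0r add0r addr0 [_%:A]mulr1.
Qed.

Section LogSumExp.
Variables (R : realType) (N : nat) (a : R).
Implicit Types (w : 'I_N -> R) (x y u v : 'rV[R]_N).

Definition expsum w y := \sum_(i < N) w i * expR (a * y ord0 i).

Lemma eq_expsum w1 w2 : w1 =1 w2 -> expsum w1 =1 expsum w2.
Proof. by move=> w12 y; apply: eq_bigr => i _; rewrite w12. Qed.

Lemma is_derive_expsum w y u :
  is_derive y u (expsum w) (a * expsum (fun i => w i * u ord0 i) y).
Proof.
have -> : expsum w = \sum_(i < N) (fun y => w i * expR (a * y ord0 i)).
  by apply/funext => z; rewrite /expsum fct_sumE.
have term i : is_derive y u (fun y => w i * expR (a * y ord0 i))
    (w i * (expR (a * y ord0 i) * (a * u ord0 i))).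
  exact/is_deriveZ/is_derive_comp_expR/is_deriveZ/is_derive_coord.
apply: is_derive_eq (is_derive_sum term) _.
by rewrite /expsum mulr_sumr; apply: eq_bigr => i _; ring.
Qed.

Definition lse y := ln (expsum (fun=> 1) y).

Hypothesis N_gt0 : (0 < N)%N.

Lemma expsum1_gt0 y : 0 < expsum (fun=> 1) y.
Proof.
rewrite /expsum (bigD1 (Ordinal N_gt0)) //= mul1r ltr_pwDl ?expR_gt0 //.
by apply: sumr_ge0 => i _; rewrite mul1r expR_ge0.
Qed.

Definition gibbs_mean w y := expsum w y / expsum (fun=> 1) y.

Definition center u y i := u ord0 i - gibbs_mean (u ord0) y.

Definition gibbs_var u y := gibbs_mean (fun i => center u y i ^+ 2) y.

Lemma eq_gibbs_mean w1 w2 : w1 =1 w2 -> gibbs_mean w1 =1 gibbs_mean w2.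
Proof. by move=> w12 y; rewrite /gibbs_mean (eq_expsum w12). Qed.

Lemma gibbs_meanD w1 w2 y :
  gibbs_mean (fun i => w1 i + w2 i) y = gibbs_mean w1 y + gibbs_mean w2 y.
Proof.
rewrite /gibbs_mean -mulrDl /expsum -big_split; congr (_ / _).
by apply: eq_bigr => i _; rewrite mulrDl.
Qed.

Lemma gibbs_meanZ k w y : gibbs_mean (fun i => k * w i) y = k * gibbs_mean w y.
Proof.
rewrite /gibbs_mean mulrA /expsum mulr_sumr; congr (_ / _).
by apply: eq_bigr => i _; rewrite mulrA.
Qed.

Lemma gibbs_mean_cst k y : gibbs_mean (fun=> k) y = k.
Proof.
rewrite -[X in gibbs_mean X](funext (fun i : 'I_N => mulr1 k)) gibbs_meanZ.
by rewrite /gibbs_mean divff ?mulr1 // lt0r_neq0 ?expsum1_gt0.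
Qed.

Lemma gibbs_var_raw u y :
  gibbs_var u y = gibbs_mean (fun i => u ord0 i ^+ 2) y - gibbs_mean (u ord0) y ^+ 2.
Proof.
set c := gibbs_mean (u ord0) y.
rewrite /gibbs_var /center -/c (eq_gibbs_mean (w2 := fun i =>
  u ord0 i ^+ 2 + (- (2 * c) * u ord0 i + c ^+ 2))); last by move=> i; ring.
by rewrite !gibbs_meanD gibbs_meanZ gibbs_mean_cst -/c; ring.
Qed.

Lemma third_central_moment_raw u v y :
  gibbs_mean (fun i => center u y i ^+ 2 * center v y i) y =
  gibbs_mean (fun i => u ord0 i ^+ 2 * v ord0 i) y
  - gibbs_mean (fun i => u ord0 i ^+ 2) y * gibbs_mean (v ord0) y
  - 2 * gibbs_mean (u ord0) y * (gibbs_mean (fun i => u ord0 i * v ord0 i) y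
                                 - gibbs_mean (u ord0) y * gibbs_mean (v ord0) y).
Proof.
set c := gibbs_mean (u ord0) y; set d := gibbs_mean (v ord0) y.
rewrite /center -/c -/d (eq_gibbs_mean (w2 := fun i =>
  u ord0 i ^+ 2 * v ord0 i + (- d * u ord0 i ^+ 2 + (- (2 * c) * (u ord0 i * v ord0 i)
  + (2 * c * d * u ord0 i + (c ^+ 2 * v ord0 i + - (c ^+ 2 * d)))))));
  last by move=> i; ring.
by rewrite !gibbs_meanD !gibbs_meanZ gibbs_mean_cst -/c -/d; ring.
Qed.

Lemma is_derive_gibbs_mean w y u : is_derive y u (gibbs_mean w)
  (a * (gibbs_mean (fun i => w i * u ord0 i) y - gibbs_mean w y * gibbs_mean (u ord0) y)).
Proof.
have S_neq0 := lt0r_neq0 (expsum1_gt0 y).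
apply: is_derive_eq.
  exact/is_deriveM/is_derive_comp_inv/is_derive_expsum/S_neq0/is_derive_expsum.
rewrite /gibbs_mean /GRing.scale /= (eq_expsum (fun i => mul1r (u ord0 i))).
by field.
Qed.

Lemma is_derive_lse y u : is_derive y u lse (a * gibbs_mean (u ord0) y).
Proof.
apply: is_derive_eq; first exact/is_derive_comp_ln/is_derive_expsum/expsum1_gt0.
by rewrite /gibbs_mean (eq_expsum (fun i => mul1r (u ord0 i))) mulrC mulrA.
Qed.

Lemma is_derive_scaled_gibbs_mean u y :
  is_derive y u (fun y => a * gibbs_mean (u ord0) y) (a ^+ 2 * gibbs_var u y).
Proof.
apply: is_derive_eq; first exact/is_deriveZ/is_derive_gibbs_mean.
rewrite gibbs_var_raw /GRing.scale /= (eq_gibbs_mean (w2 := fun i => u ord0 i ^+ 2)) //.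
by ring.
Qed.

Lemma is_derive_gibbs_var u x v : is_derive x v (gibbs_var u)
  (a * gibbs_mean (fun i => center u x i ^+ 2 * center v x i) x).
Proof.
rewrite (funext (gibbs_var_raw u)); apply: is_derive_eq.
  exact: is_deriveB (is_derive_gibbs_mean _ x v) (is_deriveX 2 (is_derive_gibbs_mean _ x v)).
by rewrite third_central_moment_raw /GRing.scale /=; ring.
Qed.

Lemma ler_norm_gibbs_mean f g b y : (forall i, 0 <= f i) -> (forall i, `|g i| <= b) ->
  `|gibbs_mean (fun i => f i * g i) y| <= b * gibbs_mean f y.
Proof.
move=> f_ge0 g_le; have S_ge0 : 0 <= (expsum (fun=> 1) y)^-1.
  by rewrite invr_ge0 ltW ?expsum1_gt0.
rewrite /gibbs_mean normrM (ger0_norm S_ge0) mulrA ler_wpM2r //.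
apply: le_trans (ler_norm_sum _ _ _) _; rewrite /expsum mulr_sumr; apply: ler_sum => i _.
rewrite !normrM (ger0_norm (f_ge0 i)) (ger0_norm (expR_ge0 _)) mulrA [b * _]mulrC.
by rewrite ler_wpM2r ?expR_ge0 // ler_wpM2l.
Qed.

Lemma ler_linf_norm v i : `|v ord0 i| <= linf_norm v.
Proof. exact: (le_bigmax _ (fun i => `|v ord0 i|) i). Qed.

Lemma ler_norm_gibbs_mean_linf v y : `|gibbs_mean (v ord0) y| <= linf_norm v.
Proof.
rewrite -[leRHS]mulr1 -(gibbs_mean_cst 1 y).
rewrite (eq_gibbs_mean (w2 := fun i => 1 * v ord0 i)) => [|i]; last by rewrite mul1r.
exact/ler_norm_gibbs_mean/ler_linf_norm.
Qed.

Lemma ler_norm_third_central_moment u v x :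
  `|gibbs_mean (fun i => center u x i ^+ 2 * center v x i) x|
  <= 2 * linf_norm v * gibbs_var u x.
Proof.
apply: ler_norm_gibbs_mean => i; first exact: sqr_ge0.
have := ler_linf_norm v i; have := ler_norm_gibbs_mean_linf v x.
have := ler_normB (v ord0 i) (gibbs_mean (v ord0) x); rewrite /center; lra.
Qed.

Lemma lse_gen_self_concordant :
  gen_self_concordant2 lse (@linf_norm R N) (2 * `|a|) setT.
Proof.
move=> x _ u v.
have D1 : 'D_u lse = fun y => a * gibbs_mean (u ord0) y.
  by apply/funext => y; have [_ ->] := is_derive_lse y u.
have D2 : 'D_u (fun y => a * gibbs_mean (u ord0) y) = fun y => a ^+ 2 * gibbs_var u y.
  by apply/funext => y; have [_ ->] := is_derive_scaled_gibbs_mean u y.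
have D3 := is_deriveZ (a ^+ 2) (is_derive_gibbs_var u x v).
rewrite D1 D2; split.
- by case: (is_derive_lse x u).
- by case: (is_derive_scaled_gibbs_mean u x).
- by case: D3.
have [_ ->] := D3; have [_ ->] := is_derive_scaled_gibbs_mean u x.
have := ler_norm_third_central_moment u v x.
move=> /(ler_wpM2l (mulr_ge0 (sqr_ge0 a) (normr_ge0 a))) le_third.
rewrite /GRing.scale /= normrM normrX real_normK ?num_real // normrM; lra.
Qed.

End LogSumExp.

Section ExtraCoordinate.
Variables (R : realType) (U : normedModType R).

Lemma is_derive_fst (W : normedModType R) (h : U -> W) x t v r d :
  is_derive (x, t) (v, r) (fun z : U * R => h z.1) d <-> is_derive x v h d.
Proof. by split=> /is_derive_lineP ?; apply/is_derive_lineP. Qed.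

Lemma is_derive_snd (W : normedModType R) (h : R -> W) x t v r d :
  is_derive (x, t) (v, r) (fun z : U * R => h z.2) d <-> is_derive t r h d.
Proof. by split=> /is_derive_lineP ?; apply/is_derive_lineP. Qed.

Lemma is_derive_scale_snd_add_fst (f : U -> R) (c : R) x (t : R) u (s : R) :
  derivable f x u ->
  is_derive (x, t) (u, s) (fun z : U * R => c * z.2 + f z.1) (c * s + 'D_u f x).
Proof.
move=> fx; apply: is_deriveD.
- by apply/(is_derive_snd (fun t => c * t)); exact: is_deriveZ.
- exact/(is_derive_fst f)/derivableP.
Qed.

Lemma is_derive_cst_add_fst (g : U -> R) (k : R) x (t : R) u (s : R) :
  derivable g x u -> is_derive (x, t) (u, s) (fun z : U * R => k + g z.1) ('D_u g x).
Proof.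
move=> gx; apply: is_derive_eq (is_deriveD (is_derive_cst k _ _) _) (add0r _).
exact/(is_derive_fst g)/derivableP.
Qed.

Lemma gen_self_concordant2_add_linear (f : U -> R) (nrm : U -> R) (M c : R) :
  gen_self_concordant2 f nrm M setT ->
  gen_self_concordant2 (fun z : U * R => c * z.2 + f z.1) (fun z => nrm z.1) M setT.
Proof.
move=> f_sc [x t] _ [u s] [v r].
set g := fun z : U * R => c * z.2 + f z.1.
have Dg y t' : is_derive (y, t') (u, s) g (c * s + 'D_u f y).
  by have [fy _ _ _] := f_sc y I u u; exact: is_derive_scale_snd_add_fst.
have -> : 'D_(u, s) g = fun z => c * s + 'D_u f z.1.
  by apply/funext => -[y t']; have [_ ->] := Dg y t'.
set g1 := fun z : U * R => c * s + 'D_u f z.1.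
have D2g y t' : is_derive (y, t') (u, s) g1 ('D_u ('D_u f) y).
  by have [_ fuy _ _] := f_sc y I u u; exact: is_derive_cst_add_fst.
have -> : 'D_(u, s) g1 = fun z => 'D_u ('D_u f) z.1.
  by apply/funext => -[y t']; have [_ ->] := D2g y t'.
have [_ _ fuuv f_le] := f_sc x I u v.
have D3 : is_derive (x, t) (v, r) (fun z : U * R => 'D_u ('D_u f) z.1)
    ('D_v ('D_u ('D_u f)) x).
  exact/(is_derive_fst ('D_u ('D_u f)))/derivableP.
split; [by case: (Dg x t) | by case: (D2g x t) | by case: D3 |].
by have [_ ->] := D3; have [_ ->] := D2g x t.
Qed.

End ExtraCoordinate.

Lemma Psi_lse (R : realType) (N : nat) (eta : R) :
  @Psi R eta N = lse (Num.sqrt 2 * eta).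
Proof.
apply/funext => y; rewrite /Psi /lse /expsum; congr ln.
by apply: eq_bigr => i _; rewrite mul1r.
Qed.

Theorem proposition6p9 (R : realType) (N : nat) (hN : (0 < N)%N)
    (eta : R) (heta : 0 < eta) :
  gen_self_concordant2 (@Psi R eta N) (@linf_norm R N)
    (2 * Num.sqrt 2 * eta) setT /\
  gen_self_concordant2 (@logPhi R eta N) (fun z => linf_norm z.1)
    (2 * Num.sqrt 2 * eta) setT.
Proof.
have -> : 2 * Num.sqrt 2 * eta = 2 * `|Num.sqrt 2 * eta|.
  by rewrite ger0_norm ?mulr_ge0 ?sqrtr_ge0 ?ltW // mulrA.
have Psi_sc := lse_gen_self_concordant (Num.sqrt 2 * eta) hN.
split; first by rewrite Psi_lse.
have -> : @logPhi R eta N = fun z => - eta ^+ 2 * z.2 + Psi eta z.1 by [].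
by rewrite Psi_lse; exact: gen_self_concordant2_add_linear.
Qed.
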